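(* Let $n=2^r$, $m\ge1$, and consider the variables $P_{i,j}$ ($i\in[m]$, $j\in[r]$) of the binary $\mathrm{PHP}^m_n$. Let $\mathcal R'$ be the random restriction which, for each pigeon $i$ independently, selects a bit position $j\in[r]$ uniformly at random and sets $P_{i,j}$ to $0$ or $1$ with probability $\frac12$ each. Then a term $T$ that mentions $n'$ pigeons does not evaluate to zero under $\mathcal R'$ (i.e. no literal of $T$ is set false) with probability at most $e^{-n'/(2\log_2 n)}$.
   Context: In the binary Pigeonhole Principle, $P_{i,j}$ is the $j$th bit of the binary representation of the hole of pigeon $i$. A term is a conjunction of literals over the variables $P_{i,j}$; it mentions pigeon $i$ if it contains a literal of some variable $P_{i,j}$. *)

From mathcomp Require Import all_boot all_order all_algebra.
From mathcomp Require Import all_classical all_reals.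
From mathcomp Require Import sequences exp.
Set Implicit Arguments. Unset Strict Implicit. Unset Printing Implicit Defensive.

Definition bvar (m r : nat) := ('I_m * 'I_r)%type.

(* A literal ((i,j), s) asserts P_{i,j} = s  (s = true: positive literal,
   s = false: negated literal). A term is a (finite) set of literals,
   read as their conjunction. *)
Definition literal (m r : nat) := (bvar m r * bool)%type.
Definition term (m r : nat) := {set literal m r}.

(* An outcome of the random restriction R': for each pigeon i, the chosen
   bit position j_i and the value b_i assigned to P_{i,j_i}. *)
Definition restr (m r : nat) := {ffun 'I_m -> 'I_r * bool}.

Definition lit_false m r (rho : restr m r) (l : literal m r) : bool :=
  ((rho l.1.1).1 == l.1.2) && ((rho l.1.1).2 != l.2).

Definition term_zero m r (T : term m r) (rho : restr m r) : bool :=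
  [exists l in T, lit_false rho l].

Definition mentions m r (T : term m r) (i : 'I_m) : bool :=
  [exists l in T, l.1.1 == i].

Definition npigeons m r (T : term m r) : nat := #|[set i | mentions T i]|.

(* Probability under R' (uniform over all outcomes, i.e. independent uniform
   choices of j_i and b_i for each pigeon) that T does not evaluate to zero. *)
Definition prob_not_zero (R : realType) m r (T : term m r) : R :=
  (#|[set rho : restr m r | ~~ term_zero T rho]|%:R /
   #|[set: restr m r]|%:R)%R.

(* The outcome of R' is a product over pigeons, and T survives iff, for every
   pigeon i, the pair (j_i, b_i) falsifies no literal of T on pigeon i.  So the
   survival probability is a product of per-pigeon factors, each at most 1, and
   at most 1 - 1/(2r) for a mentioned pigeon: that pigeon's literal ((i,j),s)
   is killed by the outcome (j, ~~ s).  Conclude with 1 - x <= e^(-x). *)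

From mathcomp Require Import all_boot all_order all_algebra.
From mathcomp Require Import all_classical all_reals.
From mathcomp Require Import sequences exp.
Import GRing.Theory Num.Theory Order.TTheory.

Local Open Scope ring_scope.

Section ProductBound.
Variable R : realType.

Lemma ltn_ratio_le_expR (k K : nat) : (k < K)%N ->
  k%:R / K%:R <= expR (- K%:R^-1) :> R.
Proof.
move=> ltkK; have K0 : 0 < K%:R :> R by rewrite ltr0n (leq_trans _ ltkK).
rewrite ler_pdivrMr //; apply: le_trans (_ : (1 - K%:R^-1) * K%:R <= _).
  by rewrite mulrBl mul1r mulVf ?lt0r_neq0 // lerBrDr natr1 ler_nat.
by rewrite ler_pM2r // expR_ge1Dx.
Qed.

Lemma prod_ratio_le_expR (I : finType) (A : {pred I}) (f : I -> nat) (K : nat) :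
  (0 < K)%N -> (forall i, f i <= K)%N -> (forall i, i \in A -> f i < K)%N ->
  \prod_(i : I) ((f i)%:R / K%:R) <= expR (- (#|A|%:R / K%:R)) :> R.
Proof.
move=> K0 fleK fltK.
apply: le_trans (_ : _ <= \prod_i (if i \in A then expR (- K%:R^-1) else 1)) _.
  apply: ler_prod => i _; rewrite divr_ge0 ?ler0n //=.
  case: ifPn => [/fltK|_]; first exact: ltn_ratio_le_expR.
  by rewrite ler_pdivrMr ?ltr0n // mul1r ler_nat.
by rewrite -big_mkcond prodr_const -expRM_natl mulrN.
Qed.

End ProductBound.

Section Survivors.
Variables (m r : nat) (T : term m r).

Definition survives_at (i : 'I_m) : pred ('I_r * bool) :=
  fun c => [forall l in T, (l.1.1 == i) ==> ~~ ((c.1 == l.1.2) && (c.2 != l.2))].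

Lemma card_term_nonzero :
  #|[set rho : restr m r | ~~ term_zero T rho]| = (\prod_i #|survives_at i|)%N.
Proof.
transitivity #|family survives_at|; last by rewrite card_family foldrE big_map big_enum.
apply: eq_card => rho; rewrite inE; apply/idP/familyP.
- move=> alive i; apply/forall_inP => l lT; apply/implyP => /eqP li.
  by apply: contra alive => dead; apply/exists_inP; exists l; rewrite // /lit_false li.
- move=> alive; apply/exists_inP => -[l lT]; rewrite /lit_false => dead.
  by have /forall_inP /(_ l lT) := alive l.1.1; rewrite eqxx dead.
Qed.

Lemma card_survives_at_le i : (#|survives_at i| <= r * 2)%N.
Proof. by have := max_card (survives_at i); rewrite card_prod card_ord card_bool. Qed.

Lemma card_survives_at_lt i : mentions T i -> (#|survives_at i| < r * 2)%N.
Proof.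
case/exists_inP => l lT /eqP li.
have killer : (l.1.2, ~~ l.2) \notin survives_at i.
  by apply/forall_inP => /(_ l lT); rewrite li eqxx /= eqxx; case: l.2.
apply: leq_trans (_ : #|predC1 (l.1.2, ~~ l.2)| < _)%N.
  rewrite ltnS; apply/subset_leq_card/fintype.subsetP => c alive; rewrite !inE.
  by apply: contraNneq killer => <-.
rewrite cardC1 card_prod card_ord card_bool prednK // muln_gt0 andbT.
exact: leq_ltn_trans (ltn_ord l.1.2).
Qed.

End Survivors.

Lemma ln_exp2n_div_ln2 (R : realType) (r : nat) : ln (2 ^ r)%N%:R / ln 2 = r%:R :> R.
Proof.
have ln2_gt0 : 0 < ln (2 : R) by rewrite ln_gt0 // ltr1n.
by rewrite natrX lnXn // -[ln 2 *+ r]mulr_natl mulfK // gt_eqF.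
Qed.

Theorem lemma5 (R : realType) (n m r : nat) (hn : n = (2 ^ r)%N)
  (hm : (1 <= m)%N) (hr : (1 <= r)%N) (T : term m r) :
  (prob_not_zero R T <=
   expR (- ((npigeons T)%:R / (2 * (ln (n%:R : R) / ln (2 : R))))))%R.
Proof.
have -> : 2 * (ln n%:R / ln 2) = (r * 2)%N%:R :> R.
  by rewrite hn ln_exp2n_div_ln2 natrM mulrC.
rewrite /prob_not_zero card_term_nonzero cardsT card_ffun card_prod !card_ord.
rewrite card_bool natr_prod natrX -[m in _ ^+ m]card_ord -prodr_const.
rewrite -prodf_div; apply: prod_ratio_le_expR => [|i|i].
- by rewrite muln_gt0 hr.
- exact: card_survives_at_le.
- by rewrite inE; apply: card_survives_at_lt.
Qed.
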